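(* For all $n\ge1$ and $a>0$, writing $R_k=R_k(a)$, $$R_{n-1}R_{n+1}(R_nR_{n-1}+8n)(R_{n+1}R_n+8n+8)=\Big[8a^2R_n+R_nR_{n-1}R_{n+1}-4(aR_n+n+1)R_{n+1}-4(aR_n+n)R_{n-1}\Big]^2.$$
   Context: Fix $a>0$. Let $w(x)=e^{-x^2}\chi_{\mathbb{R}\setminus(-a,a)}(x)$. Let $P_n$ be the monic orthogonal polynomials for $w$ on $\mathbb{R}$, with $h_n=\int P_n^2w\,dx$. Define $$R_n(a)=\frac{2e^{-a^2}P_n(a)^2}{h_n(a)}.$$ *)

From Stdlib Require Import Reals.
Open Scope R_scope.

Definition int_to_pinf (f : R -> R) (a l : R) : Prop :=
  (forall b, inhabited (Riemann_integrable f a b)) /\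
  forall eps, 0 < eps -> exists M, forall b (pr : Riemann_integrable f a b),
      M <= b -> Rabs (RiemannInt pr - l) < eps.

Definition int_from_minf (f : R -> R) (b l : R) : Prop :=
  (forall c, inhabited (Riemann_integrable f c b)) /\
  forall eps, 0 < eps -> exists M, forall c (pr : Riemann_integrable f c b),
      c <= M -> Rabs (RiemannInt pr - l) < eps.

(* Gaussian factor; the weight is w = gauss * indicator of R \ (-a,a), the
   restriction being implemented by integrating over (-oo,-a] and [a,+oo). *)
Definition gauss (x : R) : R := exp (- x ^ 2).

Definition wint (a : R) (f : R -> R) (l : R) : Prop :=
  exists l1 l2,
    int_from_minf (fun x => f x * gauss x) (- a) l1 /\
    int_to_pinf (fun x => f x * gauss x) a l2 /\
    l = l1 + l2.

Fixpoint psum (c : nat -> R) (n : nat) (x : R) : R :=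
  match n with
  | O => 0
  | S m => psum c m x + c m * x ^ m
  end.

Definition monic_poly_deg (p : R -> R) (n : nat) : Prop :=
  exists c : nat -> R, forall x, p x = x ^ n + psum c n x.

Definition monic_OP_family (a : R) (P : nat -> R -> R) (h : nat -> R) : Prop :=
  forall k : nat,
    monic_poly_deg (P k) k /\
    (forall j : nat, (j < k)%nat -> wint a (fun x => P k x * x ^ j) 0) /\
    wint a (fun x => (P k x) ^ 2) (h k).

Definition Rn (a : R) (P : nat -> R -> R) (h : nat -> R) (k : nat) : R :=
  2 * exp (- a ^ 2) * (P k a) ^ 2 / h k.

(* The weight is even, so [P_n] has the parity of [n], and the three-term recurrence
   reads [x P_n = P_{n+1} + (h_n / h_{n-1}) P_{n-1}]. Integrating
   [(P_n P_{n-1} e^{-x^2})'] over [R \ (-a,a)], orthogonality leaves only leading terms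
   while the boundary terms at [-a] and [a] add up by parity:
   [n h_{n-1} = 2 h_n - 2 e^{-a^2} P_n(a) P_{n-1}(a)].
   This relation at [n] and [n+1], with the recurrence at [x = a], expresses [h_{n+1}],
   [P_{n+1}(a)] and [n] through the other quantities, and the identity between
   [R_{n-1}], [R_n], [R_{n+1}] becomes a rational identity. *)

From Stdlib Require Import Reals Lra Lia Psatz FunctionalExtensionality ClassicalEpsilon.
From Coquelicot Require Import Coquelicot.
Open Scope R_scope.

(** * Improper integrals *)

Lemma eq_of_close (l1 l2 : R) :
  (forall eps, 0 < eps -> exists I, Rabs (I - l1) < eps /\ Rabs (I - l2) < eps) ->
  l1 = l2.
Proof.
  intros H. destruct (Req_dec l1 l2) as [| Hne]; auto. exfalso.
  assert (Hd : 0 < Rabs (l1 - l2) / 2).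
  { assert (Hsub : l1 - l2 <> 0) by lra. pose proof (Rabs_pos_lt _ Hsub). lra. }
  destruct (H _ Hd) as [I [H1 H2]].
  pose proof (Rabs_triang (l1 - I) (I - l2)) as Htri.
  rewrite Rabs_minus_sym in H1. replace (l1 - I + (I - l2)) with (l1 - l2) in Htri by ring.
  lra.
Qed.

Lemma int_to_pinf_unique f a l1 l2 :
  int_to_pinf f a l1 -> int_to_pinf f a l2 -> l1 = l2.
Proof.
  intros [Hi H1] [_ H2]. apply eq_of_close. intros eps He.
  destruct (H1 eps He) as [M1 HM1], (H2 eps He) as [M2 HM2].
  destruct (Hi (Rmax M1 M2)) as [pr]. exists (RiemannInt pr).
  split; [apply HM1, Rmax_l | apply HM2, Rmax_r].
Qed.

Lemma int_from_minf_unique f b l1 l2 :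
  int_from_minf f b l1 -> int_from_minf f b l2 -> l1 = l2.
Proof.
  intros [Hi H1] [_ H2]. apply eq_of_close. intros eps He.
  destruct (H1 eps He) as [M1 HM1], (H2 eps He) as [M2 HM2].
  destruct (Hi (Rmin M1 M2)) as [pr]. exists (RiemannInt pr).
  split; [apply HM1, Rmin_l | apply HM2, Rmin_r].
Qed.

Lemma Rabs_lin_lt I1 I2 l1 l2 r eps :
  0 < eps ->
  Rabs (I1 - l1) < eps / (2 * (1 + Rabs r)) ->
  Rabs (I2 - l2) < eps / (2 * (1 + Rabs r)) ->
  Rabs (I1 + r * I2 - (l1 + r * l2)) < eps.
Proof.
  intros He H1 H2. pose proof (Rabs_pos r) as Hr.
  set (d := eps / (2 * (1 + Rabs r))) in *.
  assert (Hd : d * (2 * (1 + Rabs r)) = eps) by (unfold d; field; lra).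
  replace (I1 + r * I2 - (l1 + r * l2)) with ((I1 - l1) + r * (I2 - l2)) by ring.
  eapply Rle_lt_trans; [apply Rabs_triang |]. rewrite Rabs_mult.
  assert (Rabs r * Rabs (I2 - l2) <= Rabs r * d) by (apply Rmult_le_compat_l; lra).
  nra.
Qed.

Lemma lin_tol_pos r eps : 0 < eps -> 0 < eps / (2 * (1 + Rabs r)).
Proof. intros. pose proof (Rabs_pos r). apply Rdiv_lt_0_compat; lra. Qed.

Lemma int_to_pinf_lin f g a l1 l2 r :
  int_to_pinf f a l1 -> int_to_pinf g a l2 ->
  int_to_pinf (fun x => f x + r * g x) a (l1 + r * l2).
Proof.
  intros [Hi1 H1] [Hi2 H2]. split.
  - intros b. destruct (Hi1 b) as [p1], (Hi2 b) as [p2].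
    constructor. apply RiemannInt_P10; auto.
  - intros eps He. pose proof (lin_tol_pos r eps He) as He'.
    destruct (H1 _ He') as [M1 HM1], (H2 _ He') as [M2 HM2].
    exists (Rmax M1 M2). intros b pr Hb.
    destruct (Hi1 b) as [p1], (Hi2 b) as [p2].
    rewrite (RiemannInt_P13 p1 p2 pr). apply Rabs_lin_lt; auto.
    + apply HM1. eapply Rle_trans; [apply Rmax_l | exact Hb].
    + apply HM2. eapply Rle_trans; [apply Rmax_r | exact Hb].
Qed.

Lemma int_from_minf_lin f g b l1 l2 r :
  int_from_minf f b l1 -> int_from_minf g b l2 ->
  int_from_minf (fun x => f x + r * g x) b (l1 + r * l2).
Proof.
  intros [Hi1 H1] [Hi2 H2]. split.
  - intros c. destruct (Hi1 c) as [p1], (Hi2 c) as [p2].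
    constructor. apply RiemannInt_P10; auto.
  - intros eps He. pose proof (lin_tol_pos r eps He) as He'.
    destruct (H1 _ He') as [M1 HM1], (H2 _ He') as [M2 HM2].
    exists (Rmin M1 M2). intros c pr Hc.
    destruct (Hi1 c) as [p1], (Hi2 c) as [p2].
    rewrite (RiemannInt_P13 p1 p2 pr). apply Rabs_lin_lt; auto.
    + apply HM1. eapply Rle_trans; [exact Hc | apply Rmin_l].
    + apply HM2. eapply Rle_trans; [exact Hc | apply Rmin_r].
Qed.

Lemma Riemann_integrable_comp_opp f u v :
  Riemann_integrable f u v -> Riemann_integrable (fun x => f (- x)) (- v) (- u).
Proof.
  intros pr. apply RiemannInt_P1, ex_RInt_Reals_0.
  apply (ex_RInt_ext (fun x => opp (opp (f (- x))))); [intros; apply opp_opp |].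
  apply (ex_RInt_opp (fun x => opp (f (- x)))), (ex_RInt_comp_opp f (- u) (- v)).
  rewrite !Ropp_involutive.
  apply ex_RInt_Reals_1, pr.
Qed.

Lemma RiemannInt_comp_opp f u v u' v' (pr : Riemann_integrable f u v)
  (pr' : Riemann_integrable (fun x => f (- x)) u' v') :
  u' = - v -> v' = - u -> RiemannInt pr' = RiemannInt pr.
Proof.
  intros -> ->.
  rewrite <- RInt_Reals. apply is_RInt_unique.
  assert (H : is_RInt f (- - u) (- - v) (RiemannInt pr)).
  { rewrite !Ropp_involutive. apply ex_RInt_Reals_aux_1. }
  apply is_RInt_comp_opp, is_RInt_swap, is_RInt_opp in H.
  rewrite opp_opp in H.
  apply (is_RInt_ext _ _ _ _ _ (fun x _ => opp_opp (f (- x)))) in H. exact H.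
Qed.

Lemma int_to_pinf_comp_opp f a l :
  int_to_pinf f a l -> int_from_minf (fun x => f (- x)) (- a) l.
Proof.
  intros [Hi H]. split.
  - intros c. destruct (Hi (- c)) as [pr].
    constructor. rewrite <- (Ropp_involutive c) at 1.
    apply Riemann_integrable_comp_opp, pr.
  - intros eps He. destruct (H eps He) as [M HM]. exists (- M). intros c pr' Hc.
    destruct (Hi (- c)) as [pr]. rewrite (RiemannInt_comp_opp _ _ _ _ _ pr pr').
    + apply HM. lra.
    + ring.
    + reflexivity.
Qed.

Lemma int_from_minf_comp_opp f b l :
  int_from_minf f b l -> int_to_pinf (fun x => f (- x)) (- b) l.
Proof.
  intros [Hi H]. split.
  - intros c. destruct (Hi (- c)) as [pr].
    constructor. rewrite <- (Ropp_involutive c).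
    apply Riemann_integrable_comp_opp, pr.
  - intros eps He. destruct (H eps He) as [M HM]. exists (- M). intros c pr' Hc.
    destruct (Hi (- c)) as [pr]. rewrite (RiemannInt_comp_opp _ _ _ _ _ pr pr').
    + apply HM. lra.
    + reflexivity.
    + ring.
Qed.

Lemma gauss_opp x : gauss (- x) = gauss x.
Proof. unfold gauss. f_equal. ring. Qed.

Lemma wint_ext a f g l : (forall x, f x = g x) -> wint a f l -> wint a g l.
Proof. intros E. replace g with f; auto. apply functional_extensionality; auto. Qed.

Lemma wint_unique a f l1 l2 : wint a f l1 -> wint a f l2 -> l1 = l2.
Proof.
  intros [u1 [v1 [A1 [B1 ->]]]] [u2 [v2 [A2 [B2 ->]]]].
  rewrite (int_from_minf_unique _ _ _ _ A1 A2), (int_to_pinf_unique _ _ _ _ B1 B2).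
  reflexivity.
Qed.

Lemma wint_lin a f g l1 l2 r : wint a f l1 -> wint a g l2 ->
  wint a (fun x => f x + r * g x) (l1 + r * l2).
Proof.
  intros [u1 [v1 [A1 [B1 ->]]]] [u2 [v2 [A2 [B2 ->]]]].
  exists (u1 + r * u2), (v1 + r * v2). split; [| split].
  - replace (fun x => (f x + r * g x) * gauss x)
      with (fun x => f x * gauss x + r * (g x * gauss x))
      by (apply functional_extensionality; intros; ring).
    apply int_from_minf_lin; auto.
  - replace (fun x => (f x + r * g x) * gauss x)
      with (fun x => f x * gauss x + r * (g x * gauss x))
      by (apply functional_extensionality; intros; ring).
    apply int_to_pinf_lin; auto.
  - ring.
Qed.

Lemma wint_scal a f l r : wint a f l -> wint a (fun x => r * f x) (r * l).
Proof.
  intros H. apply (wint_ext a (fun x => f x + (r - 1) * f x)); [intros; ring |].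
  replace (r * l) with (l + (r - 1) * l) by ring. apply wint_lin; exact H.
Qed.

Lemma wint_comp_opp a f l : wint a f l -> wint a (fun x => f (- x)) l.
Proof.
  intros [l1 [l2 [A [B ->]]]].
  assert (E : (fun x => f (- x) * gauss x) = (fun x => (fun y => f y * gauss y) (- x)))
    by (apply functional_extensionality; intros; rewrite gauss_opp; auto).
  exists l2, l1. rewrite E. split; [| split].
  - apply (int_to_pinf_comp_opp (fun y => f y * gauss y)), B.
  - rewrite <- (Ropp_involutive a).
    apply (int_from_minf_comp_opp (fun y => f y * gauss y)), A.
  - ring.
Qed.

(** * Polynomial functions *)

Definition is_poly_lt (k : nat) (f : R -> R) : Prop :=
  exists c, forall x, f x = psum c k x.

Definition is_poly (f : R -> R) : Prop := exists k, is_poly_lt k f.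

Lemma psum_ext c d k x :
  (forall i, (i < k)%nat -> c i = d i) -> psum c k x = psum d k x.
Proof.
  induction k as [| k IH]; simpl; intros H; auto.
  rewrite IH, H; auto.
Qed.

Lemma psum_add c d k x : psum (fun i => c i + d i) k x = psum c k x + psum d k x.
Proof. induction k as [| k IH]; simpl; [ring | rewrite IH; ring]. Qed.

Lemma psum_scal c r k x : psum (fun i => r * c i) k x = r * psum c k x.
Proof. induction k as [| k IH]; simpl; [ring | rewrite IH; ring]. Qed.

Lemma psum_shift c k x :
  psum (fun i => match i with O => 0 | S i => c i end) (S k) x = x * psum c k x.
Proof.
  induction k as [| k IH]; [simpl; ring |].
  transitivity (x * psum c k x + c k * x ^ S k); [rewrite <- IH; reflexivity | simpl; ring].
Qed.

Lemma opp_pow x k : (- x) ^ k = (-1) ^ k * x ^ k.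
Proof. rewrite <- Rpow_mult_distr. f_equal. ring. Qed.

Lemma neg1_pow_mul_self k : (-1) ^ k * (-1) ^ k = 1.
Proof. rewrite <- Rpow_mult_distr. replace (-1 * -1) with 1 by ring. apply pow1. Qed.

Lemma psum_opp c k x : psum (fun i => (-1) ^ i * c i) k x = psum c k (- x).
Proof.
  induction k as [| k IH]; simpl; auto. rewrite IH, (opp_pow x k). ring.
Qed.

Lemma is_poly_lt_ext k f g : (forall x, f x = g x) -> is_poly_lt k f -> is_poly_lt k g.
Proof. intros E [c Hc]. exists c. intros x. rewrite <- E. auto. Qed.

Lemma is_poly_lt_0 : is_poly_lt 0 (fun _ => 0).
Proof. exists (fun _ => 0). reflexivity. Qed.

Lemma is_poly_lt_le k k' f : (k <= k')%nat -> is_poly_lt k f -> is_poly_lt k' f.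
Proof.
  intros Hk [c Hc]. exists (fun i => if (i <? k)%nat then c i else 0). intros x.
  rewrite Hc. induction Hk as [| k' Hk IH]; simpl.
  - apply psum_ext. intros i Hi. apply Nat.ltb_lt in Hi. rewrite Hi. auto.
  - rewrite <- IH. replace (k' <? k)%nat with false by (symmetry; apply Nat.ltb_ge; lia).
    ring.
Qed.

Lemma is_poly_lt_add k f g :
  is_poly_lt k f -> is_poly_lt k g -> is_poly_lt k (fun x => f x + g x).
Proof.
  intros [c Hc] [d Hd]. exists (fun i => c i + d i). intros. rewrite psum_add, Hc, Hd. auto.
Qed.

Lemma is_poly_lt_scal k r f : is_poly_lt k f -> is_poly_lt k (fun x => r * f x).
Proof. intros [c Hc]. exists (fun i => r * c i). intros. rewrite psum_scal, Hc. auto. Qed.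

Lemma is_poly_lt_mulx k f : is_poly_lt k f -> is_poly_lt (S k) (fun x => x * f x).
Proof. intros [c Hc]. eexists. intros x. rewrite psum_shift, Hc. auto. Qed.

Lemma is_poly_lt_pow j : is_poly_lt (S j) (fun x => x ^ j).
Proof.
  exists (fun i => if (i =? j)%nat then 1 else 0). intros x. simpl.
  rewrite Nat.eqb_refl, (psum_ext _ (fun _ => 0 * 1)), psum_scal; [ring |].
  intros i Hi. replace (i =? j)%nat with false by (symmetry; apply Nat.eqb_neq; lia). ring.
Qed.

Lemma is_poly_lt_mul_pow j m f :
  is_poly_lt m f -> is_poly_lt (m + j) (fun x => x ^ j * f x).
Proof.
  intros Hf. induction j as [| j IH].
  - rewrite Nat.add_0_r. apply (is_poly_lt_ext _ f); [intros; simpl; ring | exact Hf].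
  - rewrite Nat.add_succ_r.
    apply (is_poly_lt_ext _ (fun x => x * (x ^ j * f x))); [intros; simpl; ring |].
    apply is_poly_lt_mulx, IH.
Qed.

Lemma is_poly_lt_mul m n f g :
  is_poly_lt m f -> is_poly_lt n g -> is_poly_lt (m + n) (fun x => f x * g x).
Proof.
  intros Hf [d Hd]. apply (is_poly_lt_ext _ (fun x => f x * psum d n x));
    [intros; rewrite Hd; auto |].
  clear Hd g. induction n as [| n IH]; simpl.
  - apply (is_poly_lt_ext _ (fun _ => 0)); [intros; ring |].
    apply (is_poly_lt_le 0); [lia | apply is_poly_lt_0].
  - apply (is_poly_lt_ext _ (fun x => f x * psum d n x + d n * (x ^ n * f x)));
      [intros; ring |].
    apply is_poly_lt_add; apply (is_poly_lt_le (m + n)); try lia.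
    + exact IH.
    + apply is_poly_lt_scal, is_poly_lt_mul_pow, Hf.
Qed.

Lemma is_poly_lt_comp_opp k f : is_poly_lt k f -> is_poly_lt k (fun x => f (- x)).
Proof. intros [c Hc]. exists (fun i => (-1) ^ i * c i). intros x. rewrite psum_opp, Hc. auto. Qed.

Lemma is_poly_lt_derive_pow k : is_poly_lt k (fun x => INR k * x ^ pred k).
Proof.
  destruct k as [| j].
  - apply (is_poly_lt_ext _ (fun _ => 0)); [intros; simpl; ring | apply is_poly_lt_0].
  - apply is_poly_lt_scal, is_poly_lt_pow.
Qed.

Lemma psum_derive c k :
  exists g, is_poly_lt (pred k) g /\ forall x, derivable_pt_lim (psum c k) x (g x).
Proof.
  induction k as [| k [g [Hg Dg]]].
  - exists (fun _ => 0). split; [apply is_poly_lt_0 |]. intros; apply derivable_pt_lim_const.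
  - exists (fun x => g x + c k * (INR k * x ^ pred k)). split.
    + apply is_poly_lt_add; [apply (is_poly_lt_le (pred k)); [lia | exact Hg] |].
      apply is_poly_lt_scal, is_poly_lt_derive_pow.
    + intros x. apply (derivable_pt_lim_plus _ (fun y => c k * y ^ k)); [apply Dg |].
      apply (derivable_pt_lim_scal (fun y => y ^ k)), derivable_pt_lim_pow.
Qed.

Lemma is_poly_lt_derive k f : is_poly_lt (S k) f ->
  exists g, is_poly_lt k g /\ forall x, derivable_pt_lim f x (g x).
Proof.
  intros [c Hc]. replace f with (psum c (S k)) by (apply functional_extensionality; auto).
  exact (psum_derive c (S k)).
Qed.

Lemma psum_bound c k :
  exists C, 0 <= C /\ forall x, 1 <= x -> Rabs (psum c k x) <= C * x ^ pred k.
Proof.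
  induction k as [| k [C [HC HB]]].
  - exists 0. split; [lra |]. intros x _. simpl. rewrite Rabs_R0. lra.
  - exists (C + Rabs (c k)). split; [pose proof (Rabs_pos (c k)); lra |]. intros x Hx. simpl.
    eapply Rle_trans; [apply Rabs_triang |].
    rewrite Rabs_mult, (Rabs_pos_eq (x ^ k)) by (apply pow_le; lra).
    assert (x ^ pred k <= x ^ k) by (apply Rle_pow; lia || lra).
    specialize (HB x Hx). nra.
Qed.

Lemma is_poly_lt_bound k f : is_poly_lt (S k) f ->
  exists C, 0 <= C /\ forall x, 1 <= x -> Rabs (f x) <= C * x ^ k.
Proof. intros [c Hc]. setoid_rewrite Hc. apply (psum_bound c (S k)). Qed.

Lemma is_poly_of_lt k f : is_poly_lt k f -> is_poly f.
Proof. intros H. exists k. exact H. Qed.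

Lemma is_poly_const r : is_poly (fun _ => r).
Proof. exists 1%nat, (fun _ => r). intros; simpl; ring. Qed.

Lemma is_poly_id : is_poly (fun x => x).
Proof.
  apply (is_poly_of_lt 2), (is_poly_lt_ext _ (fun x => x ^ 1));
    [intros; ring | apply is_poly_lt_pow].
Qed.

Lemma is_poly_add f g : is_poly f -> is_poly g -> is_poly (fun x => f x + g x).
Proof.
  intros [k Hk] [m Hm]. exists (max k m).
  apply is_poly_lt_add; [apply (is_poly_lt_le k) | apply (is_poly_lt_le m)]; auto; lia.
Qed.

Lemma is_poly_mul f g : is_poly f -> is_poly g -> is_poly (fun x => f x * g x).
Proof. intros [k Hk] [m Hm]. exists (k + m)%nat. apply is_poly_lt_mul; auto. Qed.

Lemma is_poly_pow f n : is_poly f -> is_poly (fun x => f x ^ n).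
Proof.
  intros Hf. induction n as [| n IH]; [exact (is_poly_const 1) |].
  apply (is_poly_mul f (fun x => f x ^ n)); assumption.
Qed.

Lemma is_poly_opp f : is_poly f -> is_poly (fun x => - f x).
Proof.
  intros [k Hk]. exists k.
  apply (is_poly_lt_ext _ (fun x => -1 * f x)); [intros; ring | apply is_poly_lt_scal, Hk].
Qed.

Lemma is_poly_sub f g : is_poly f -> is_poly g -> is_poly (fun x => f x - g x).
Proof. intros. apply (is_poly_add f (fun x => - g x)); auto. apply is_poly_opp; auto. Qed.

Lemma is_poly_comp_opp f : is_poly f -> is_poly (fun x => f (- x)).
Proof. intros [k Hk]. exists k. apply is_poly_lt_comp_opp, Hk. Qed.

Lemma is_poly_psum c k : is_poly (psum c k).
Proof. exists k, c. reflexivity. Qed.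

Create HintDb poly.
#[export] Hint Resolve is_poly_const is_poly_pow is_poly_id is_poly_add is_poly_mul
  is_poly_opp is_poly_sub is_poly_comp_opp is_poly_psum : poly.

Ltac solve_poly := solve [eauto 10 with poly].

Lemma is_poly_continuous f x : is_poly f -> continuity_pt f x.
Proof.
  intros [k Hk]. apply (is_poly_lt_le k (S k)) in Hk; [| lia].
  destruct (is_poly_lt_derive _ _ Hk) as [g [_ Dg]].
  apply derivable_continuous_pt. exists (g x). apply Dg.
Qed.

(** * Gaussian decay and integration by parts *)

Lemma exp_INR_mul n t : exp (INR n * t) = exp t ^ n.
Proof.
  induction n as [| n IH]; [simpl; rewrite Rmult_0_l; apply exp_0 |].
  rewrite S_INR, Rmult_plus_distr_r, Rmult_1_l, exp_plus, IH. simpl. ring.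
Qed.

Lemma pow_le_exp t n : 0 <= t -> (t / INR (S n)) ^ S n <= exp t.
Proof.
  intros Ht. assert (Hn : 0 < INR (S n)) by apply lt_0_INR, Nat.lt_0_succ.
  replace t with (INR (S n) * (t / INR (S n))) at 2 by (field; lra).
  rewrite exp_INR_mul. apply pow_incr. split.
  - apply Rdiv_le_0_compat; lra.
  - pose proof (exp_ineq1_le (t / INR (S n))). lra.
Qed.

Lemma gauss_pos x : 0 < gauss x.
Proof. apply exp_pos. Qed.

Lemma gauss_mul_exp x : gauss x * exp (x ^ 2) = 1.
Proof. unfold gauss. rewrite <- exp_plus, Rplus_opp_l. apply exp_0. Qed.

(* From [exp (x^2) >= (x^2 / (k+1))^(k+1)]. *)
Lemma pow_gauss_le x k : 1 <= x -> x * x ^ k * gauss x <= INR (S k) ^ S k.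
Proof.
  intros Hx. set (K := INR (S k)). assert (HK : 0 < K) by apply lt_0_INR, Nat.lt_0_succ.
  pose proof (pow_le_exp (x ^ 2) k ltac:(nra)) as He. fold K in He.
  unfold Rdiv in He. rewrite Rpow_mult_distr, pow_inv, <- pow_mult in He.
  assert (HKk : 0 < K ^ S k) by (apply pow_lt; lra).
  assert (Hpow : x ^ (2 * S k) <= K ^ S k * exp (x ^ 2)).
  { apply (Rmult_le_reg_r (/ K ^ S k)); [apply Rinv_0_lt_compat; lra |].
    replace (K ^ S k * exp (x ^ 2) * / K ^ S k) with (exp (x ^ 2)) by (field; lra).
    exact He. }
  assert (Hmon : x * x ^ k <= x ^ (2 * S k)).
  { change (x * x ^ k) with (x ^ S k). apply Rle_pow; lia || lra. }
  pose proof (gauss_pos x). pose proof (gauss_mul_exp x).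
  apply Rle_trans with (x ^ (2 * S k) * gauss x); [apply Rmult_le_compat_r; lra |].
  apply Rle_trans with (K ^ S k * exp (x ^ 2) * gauss x); [apply Rmult_le_compat_r; lra |].
  nra.
Qed.

Lemma poly_gauss_small f : is_poly f ->
  forall eps M, 0 < eps -> exists b, M <= b /\ Rabs (f b * gauss b) < eps.
Proof.
  intros [k Hk] eps M He. apply (is_poly_lt_le k (S k)) in Hk; [| lia].
  destruct (is_poly_lt_bound _ _ Hk) as [C [HC Hf]].
  set (B := C * INR (S k) ^ S k).
  assert (HB : 0 <= B) by (apply Rmult_le_pos; [lra | apply pow_le, pos_INR]).
  set (b := Rmax M (Rmax 1 (B / eps + 1))). exists b.
  pose proof (Rmax_l M (Rmax 1 (B / eps + 1))). pose proof (Rmax_r M (Rmax 1 (B / eps + 1))).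
  pose proof (Rmax_l 1 (B / eps + 1)). pose proof (Rmax_r 1 (B / eps + 1)).
  assert (Hb1 : 1 <= b) by (unfold b; lra).
  split; [unfold b; lra |].
  rewrite Rabs_mult, (Rabs_pos_eq (gauss b)) by (left; apply gauss_pos).
  assert (Hbound : Rabs (f b) * gauss b * b <= B).
  { pose proof (Hf b Hb1). pose proof (pow_gauss_le b k Hb1). pose proof (gauss_pos b).
    apply Rle_trans with (C * b ^ k * gauss b * b);
      [apply Rmult_le_compat_r, Rmult_le_compat_r; lra |].
    unfold B. replace (C * b ^ k * gauss b * b) with (C * (b * b ^ k * gauss b)) by ring.
    apply Rmult_le_compat_l; lra. }
  assert (B < eps * b).
  { assert (B / eps * eps = B) by (field; lra). unfold b. nra. }
  pose proof (Rabs_pos (f b)). pose proof (gauss_pos b). nra.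
Qed.

Lemma RiemannInt_derive F F' u v (pr : Riemann_integrable F' u v) :
  (forall x, derivable_pt_lim F x (F' x)) -> (forall x, continuity_pt F' x) ->
  RiemannInt pr = F v - F u.
Proof.
  intros HD HC. rewrite <- (RInt_Reals _ _ _ pr). apply is_RInt_unique.
  apply (is_RInt_derive F).
  - intros x _. apply is_derive_Reals, HD.
  - intros x _. apply continuity_pt_filterlim, HC.
Qed.

Lemma int_to_pinf_derive F F' a l :
  (forall x, derivable_pt_lim F x (F' x)) -> (forall x, continuity_pt F' x) ->
  (forall eps M, 0 < eps -> exists b, M <= b /\ Rabs (F b) < eps) ->
  int_to_pinf F' a l -> l = - F a.
Proof.
  intros HD HC Hsmall [Hi Hl]. symmetry. apply eq_of_close. intros eps He.
  destruct (Hl eps He) as [M HM]. destruct (Hsmall eps M He) as [b [Hb HFb]].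
  destruct (Hi b) as [pr]. exists (RiemannInt pr). split; [| apply HM, Hb].
  rewrite (RiemannInt_derive F F' a b pr HD HC). replace (F b - F a - - F a) with (F b) by ring.
  exact HFb.
Qed.

Lemma int_from_minf_derive F F' b l :
  (forall x, derivable_pt_lim F x (F' x)) -> (forall x, continuity_pt F' x) ->
  (forall eps M, 0 < eps -> exists c, c <= M /\ Rabs (F c) < eps) ->
  int_from_minf F' b l -> l = F b.
Proof.
  intros HD HC Hsmall [Hi Hl]. symmetry. apply eq_of_close. intros eps He.
  destruct (Hl eps He) as [M HM]. destruct (Hsmall eps M He) as [c [Hc HFc]].
  destruct (Hi c) as [pr]. exists (RiemannInt pr). split; [| apply HM, Hc].
  rewrite (RiemannInt_derive F F' c b pr HD HC), Rabs_minus_sym.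
  replace (F b - (F b - F c)) with (F c) by ring. exact HFc.
Qed.

Lemma derivable_pt_lim_gauss x : derivable_pt_lim gauss x (- 2 * x * gauss x).
Proof. apply is_derive_Reals. unfold gauss. auto_derive; auto. simpl. ring. Qed.

Lemma continuity_pt_gauss x : continuity_pt gauss x.
Proof. apply derivable_continuous_pt. exists (- 2 * x * gauss x). apply derivable_pt_lim_gauss. Qed.

(* Integration by parts against the Gaussian: [(f e^{-x^2})' = (f' - 2 x f) e^{-x^2}],
   and the boundary terms at infinity vanish. *)
Lemma wint_ibp a f g l : is_poly f -> is_poly g -> (forall x, derivable_pt_lim f x (g x)) ->
  wint a (fun x => g x - 2 * x * f x) l -> l = exp (- a ^ 2) * (f (- a) - f a).
Proof.
  intros Pf Pg Df [l1 [l2 [H1 [H2 ->]]]].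
  assert (HD : forall x, derivable_pt_lim (fun x => f x * gauss x) x
                          ((g x - 2 * x * f x) * gauss x)).
  { intros x. replace ((g x - 2 * x * f x) * gauss x)
      with (g x * gauss x + f x * (- 2 * x * gauss x)) by ring.
    apply (derivable_pt_lim_mult f gauss); [apply Df | apply derivable_pt_lim_gauss]. }
  assert (HC : forall x, continuity_pt (fun x => (g x - 2 * x * f x) * gauss x) x).
  { intros x. apply (continuity_pt_mult (fun x => g x - 2 * x * f x) gauss);
      [apply is_poly_continuous; solve_poly | apply continuity_pt_gauss]. }
  assert (Hleft : forall eps M, 0 < eps ->
            exists c, c <= M /\ Rabs (f c * gauss c) < eps).
  { intros eps M He.
    destruct (poly_gauss_small _ (is_poly_comp_opp f Pf) eps (- M) He) as [b [Hb Hsmall]].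
    exists (- b). split; [lra |]. rewrite gauss_opp. exact Hsmall. }
  rewrite (int_from_minf_derive _ _ _ _ HD HC Hleft H1),
    (int_to_pinf_derive _ _ _ _ HD HC (poly_gauss_small f Pf) H2), gauss_opp.
  unfold gauss. ring.
Qed.

(** * Positivity of the weighted integral *)

Lemma RiemannInt_ge_const F u v (pr : Riemann_integrable F u v) m :
  u <= v -> (forall x, u < x < v -> m <= F x) -> m * (v - u) <= RiemannInt pr.
Proof.
  intros Huv H. rewrite <- (RiemannInt_const m u v (Riemann_integrable_const m u v)).
  apply RiemannInt_P19; auto.
Qed.

Lemma int_from_minf_nonneg F b l :
  (forall x, 0 <= F x) -> int_from_minf F b l -> 0 <= l.
Proof.
  intros HF [Hi Hl]. apply Rnot_lt_le. intros Hneg.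
  destruct (Hl (- l)) as [M HM]; [lra |].
  destruct (Hi (Rmin M b)) as [pr]. specialize (HM _ pr (Rmin_l _ _)).
  pose proof (RiemannInt_ge_const F _ _ pr 0 (Rmin_r _ _) (fun x _ => HF x)).
  apply Rabs_def2 in HM. lra.
Qed.

Lemma int_to_pinf_pos F a X d l :
  (forall x, continuity_pt F x) -> (forall x, 0 <= F x) -> a <= X ->
  (forall x, X <= x <= X + 1 -> d <= F x) -> 0 < d -> int_to_pinf F a l -> 0 < l.
Proof.
  intros HC HF HX Hd Hdpos [Hi Hl].
  assert (Hint : forall u v, u <= v -> Riemann_integrable F u v)
    by (intros u v Huv; apply continuity_implies_RiemannInt; auto).
  destruct (Hl (d / 2)) as [M HM]; [lra |].
  set (b := Rmax M (X + 1)). assert (Hb : X + 1 <= b) by apply Rmax_r.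
  destruct (Hi b) as [pr]. specialize (HM _ pr (Rmax_l _ _)). apply Rabs_def2 in HM.
  pose (p1 := Hint a X HX). pose (p2 := Hint X (X + 1) ltac:(lra)).
  pose (p3 := Hint (X + 1) b Hb). pose (p12 := Hint a (X + 1) ltac:(lra)).
  rewrite <- (RiemannInt_P26 p12 p3 pr), <- (RiemannInt_P26 p1 p2 p12) in HM.
  pose proof (RiemannInt_ge_const F _ _ p1 0 HX (fun x _ => HF x)).
  pose proof (RiemannInt_ge_const F _ _ p3 0 Hb (fun x _ => HF x)).
  assert (d * (X + 1 - X) <= RiemannInt p2)
    by (apply RiemannInt_ge_const; [lra | intros; apply Hd; lra]).
  lra.
Qed.

Lemma gauss_decreasing x y : 0 <= x <= y -> gauss y <= gauss x.
Proof.
  intros Hxy. unfold gauss. destruct (Req_dec x y) as [-> | Hne]; [lra |].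
  left. apply exp_increasing. nra.
Qed.

Lemma wint_pos a f X l :
  (forall x, continuity_pt f x) -> (forall x, 0 <= f x) -> a <= X -> 0 <= X ->
  (forall x, X <= x <= X + 1 -> 1 <= f x) -> wint a f l -> 0 < l.
Proof.
  intros HC Hf HX HX0 H1 [l1 [l2 [Hm [Hp ->]]]].
  assert (Hcont : forall x, continuity_pt (fun x => f x * gauss x) x)
    by (intros; apply (continuity_pt_mult f gauss); [apply HC | apply continuity_pt_gauss]).
  assert (Hnn : forall x, 0 <= f x * gauss x)
    by (intros; apply Rmult_le_pos; [apply Hf | left; apply gauss_pos]).
  pose proof (int_from_minf_nonneg _ _ _ Hnn Hm).
  assert (0 < l2); [| lra].
  apply (int_to_pinf_pos _ a X (gauss (X + 1)) l2 Hcont Hnn HX); [| apply gauss_pos | exact Hp].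
  intros x Hx. pose proof (H1 x Hx). pose proof (gauss_decreasing x (X + 1) ltac:(lra)).
  pose proof (gauss_pos (X + 1)). nra.
Qed.

Lemma monic_eventually_ge_1 k r : is_poly_lt k r ->
  exists X, forall x, X <= x -> 1 <= x ^ k + r x.
Proof.
  destruct k as [| k]; intros Hr.
  - exists 0. intros x _. destruct Hr as [c Hc]. rewrite Hc. simpl. lra.
  - destruct (is_poly_lt_bound _ _ Hr) as [C [HC Hb]]. exists (C + 1). intros x Hx.
    assert (Hx1 : 1 <= x) by lra. specialize (Hb x Hx1). pose proof (Rabs_maj2 (r x)).
    assert (1 <= x ^ k) by (apply pow_R1_Rle; lra).
    simpl. nra.
Qed.

(** * Monic orthogonal polynomials *)

(* Junk value when [f] is not integrable; only used on polynomials. *)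
Definition winteg (a : R) (f : R -> R) : R := epsilon (inhabits 0) (fun l => wint a f l).

Lemma winteg_eq a f l : wint a f l -> winteg a f = l.
Proof.
  intros H. apply (wint_unique a f); [| exact H].
  apply (epsilon_spec (inhabits 0) (fun l => wint a f l)). exists l. exact H.
Qed.

Section OrthogonalPolynomials.

Variables (a : R) (P : nat -> R -> R) (h : nat -> R).
Hypothesis HOP : monic_OP_family a P h.

Local Notation I := (winteg a).

Lemma P_decomp k : exists r, is_poly_lt k r /\ forall x, P k x = x ^ k + r x.
Proof. destruct (HOP k) as [[c Hc] _]. exists (psum c k). split; [exists c |]; auto. Qed.

Lemma is_poly_lt_P k : is_poly_lt (S k) (P k).
Proof.
  destruct (P_decomp k) as [r [Hr HP]].
  apply (is_poly_lt_ext _ (fun x => x ^ k + r x)); [intros; auto |].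
  apply is_poly_lt_add; [apply is_poly_lt_pow | apply (is_poly_lt_le k); [lia | exact Hr]].
Qed.

Lemma is_poly_P k : is_poly (P k).
Proof. exact (is_poly_of_lt _ _ (is_poly_lt_P k)). Qed.

#[local] Hint Resolve is_poly_P is_poly_of_lt : poly.

Lemma wint_psum_exists k c :
  (forall i, (i <= k)%nat -> exists l, wint a (fun x => x ^ i) l) ->
  exists l, wint a (psum c k) l.
Proof.
  induction k as [| k IH]; intros Hmom.
  - destruct (Hmom 0%nat (le_n 0)) as [l Hl]. exists (0 * l).
    apply (wint_ext a (fun x => 0 * x ^ 0)); [intros; simpl; ring |]. apply wint_scal, Hl.
  - destruct IH as [l1 H1]; [intros; apply Hmom; lia |].
    destruct (Hmom k) as [l2 H2]; [lia |].
    exists (l1 + c k * l2). apply (wint_lin _ _ _ _ _ _ H1 H2).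
Qed.

(* The moments are integrable because the hypotheses say so: [P_0 = 1] has a norm
   and each [P_{j+1}] is orthogonal to [1]. *)
Lemma wint_pow_exists j : exists l, wint a (fun x => x ^ j) l.
Proof.
  induction j as [j IH] using (well_founded_induction Wf_nat.lt_wf).
  destruct (HOP j) as [[c Hc] [Horth Hnorm]]. destruct j as [| m].
  - exists (h 0%nat). apply (wint_ext _ (fun x => P 0 x ^ 2)); [| exact Hnorm].
    intros x. rewrite Hc. simpl. ring.
  - destruct (wint_psum_exists m c) as [l1 H1]; [intros; apply IH; lia |].
    destruct (IH m) as [l2 H2]; [lia |].
    exists (0 + -1 * (l1 + c m * l2)).
    apply (wint_ext _ (fun x => P (S m) x * x ^ 0 + -1 * (psum c m x + c m * x ^ m))).
    + intros x. rewrite Hc. simpl. ring.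
    + apply wint_lin; [exact (Horth 0%nat (Nat.lt_0_succ m)) | apply wint_lin; assumption].
Qed.

Lemma winteg_wint f : is_poly f -> wint a f (I f).
Proof.
  intros [k [c Hc]]. destruct (wint_psum_exists k c) as [l Hl];
    [intros; apply wint_pow_exists |].
  apply (wint_ext _ _ f) in Hl; [| intros; auto].
  rewrite (winteg_eq _ _ _ Hl). exact Hl.
Qed.

Lemma winteg_ext f g : (forall x, f x = g x) -> I f = I g.
Proof. intros E. f_equal. apply functional_extensionality, E. Qed.

Lemma winteg_lin f g r : is_poly f -> is_poly g ->
  I (fun x => f x + r * g x) = I f + r * I g.
Proof. intros Hf Hg. apply winteg_eq, wint_lin; apply winteg_wint; assumption. Qed.

Lemma winteg_scal r f : is_poly f -> I (fun x => r * f x) = r * I f.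
Proof. intros Hf. apply winteg_eq, wint_scal, winteg_wint, Hf. Qed.

Lemma winteg_comp_opp f : is_poly f -> I (fun x => f (- x)) = I f.
Proof. intros Hf. apply winteg_eq, wint_comp_opp, winteg_wint, Hf. Qed.

Lemma winteg_odd f : is_poly f -> (forall x, f (- x) = - f x) -> I f = 0.
Proof.
  intros Hf Hodd. pose proof (winteg_comp_opp f Hf) as E.
  rewrite (winteg_ext _ (fun x => -1 * f x)), winteg_scal in E
    by (auto; intros; rewrite Hodd; ring).
  lra.
Qed.

Lemma winteg_ibp f g : (forall x, derivable_pt_lim f x (g x)) -> is_poly f -> is_poly g ->
  I g - 2 * I (fun x => x * f x) = exp (- a ^ 2) * (f (- a) - f a).
Proof.
  intros Hd Hf Hg. apply (wint_ibp a f g); auto.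
  apply (wint_ext _ (fun x => g x + -2 * (x * f x))); [intros; ring |].
  replace (I g - 2 * I (fun x => x * f x)) with (I g + -2 * I (fun x => x * f x)) by ring.
  apply wint_lin; apply winteg_wint; solve_poly.
Qed.

Lemma winteg_P_pow k j : (j < k)%nat -> I (fun x => P k x * x ^ j) = 0.
Proof. intros Hj. apply winteg_eq. destruct (HOP k) as [_ [Horth _]]. auto. Qed.

Lemma winteg_P_sq k : I (fun x => P k x ^ 2) = h k.
Proof. apply winteg_eq. destruct (HOP k) as [_ [_ Hnorm]]. exact Hnorm. Qed.

Lemma winteg_orth_poly_lt q m r : is_poly q ->
  (forall j, (j < m)%nat -> I (fun x => q x * x ^ j) = 0) ->
  is_poly_lt m r -> I (fun x => q x * r x) = 0.
Proof.
  intros Hq Horth [d Hd].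
  rewrite (winteg_ext _ (fun x => q x * psum d m x)) by (intros; rewrite Hd; auto).
  assert (Hk : forall k, (k <= m)%nat -> I (fun x => q x * psum d k x) = 0); [| apply Hk; lia].
  induction k as [| k IH]; intros Hk.
  - rewrite (winteg_ext _ (fun x => 0 * q x)), winteg_scal by (auto; intros; simpl; ring). ring.
  - rewrite (winteg_ext _ (fun x => q x * psum d k x + d k * (q x * x ^ k)))
      by (intros; simpl; ring).
    rewrite winteg_lin by solve_poly. rewrite IH, Horth by lia. ring.
Qed.

Lemma winteg_P_poly_lt k r : is_poly_lt k r -> I (fun x => P k x * r x) = 0.
Proof.
  intros Hr. apply (winteg_orth_poly_lt _ k); [solve_poly | apply winteg_P_pow | exact Hr].
Qed.

Lemma winteg_P_monic k r : is_poly_lt k r -> I (fun x => P k x * (x ^ k + r x)) = h k.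
Proof.
  intros Hr. destruct (P_decomp k) as [rk [Hrk HP]].
  rewrite (winteg_ext _ (fun x => P k x ^ 2 + 1 * (P k x * (r x + -1 * rk x))))
    by (intros x; replace (x ^ k) with (P k x - rk x) by (rewrite HP; ring); ring).
  rewrite winteg_lin, winteg_P_sq by solve_poly.
  rewrite winteg_P_poly_lt; [ring |].
  apply is_poly_lt_add; [exact Hr | apply is_poly_lt_scal, Hrk].
Qed.

Lemma h_pos k : 0 < h k.
Proof.
  destruct (P_decomp k) as [r [Hr HP]]. destruct (monic_eventually_ge_1 k r Hr) as [X HX].
  set (Y := Rmax a (Rmax X 0)).
  assert (HY : a <= Y /\ X <= Y /\ 0 <= Y).
  { pose proof (Rmax_l a (Rmax X 0)). pose proof (Rmax_r a (Rmax X 0)).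
    pose proof (Rmax_l X 0). pose proof (Rmax_r X 0). unfold Y. lra. }
  apply (wint_pos a (fun x => P k x ^ 2) Y); try tauto.
  - intros x. apply is_poly_continuous. solve_poly.
  - intros x. apply pow2_ge_0.
  - intros x Hx. rewrite HP. assert (1 <= x ^ k + r x) by (apply HX; lra). nra.
  - destruct (HOP k) as [_ [_ Hnorm]]. exact Hnorm.
Qed.

Lemma winteg_P_pow_diag k : I (fun x => P k x * x ^ k) = h k.
Proof.
  rewrite <- (winteg_P_monic k (fun _ => 0) (is_poly_lt_le 0 k _ (Nat.le_0_l k) is_poly_lt_0)).
  apply winteg_ext. intros; ring.
Qed.

Lemma poly_lt_orth_zero k q : is_poly_lt k q ->
  (forall j, (j < k)%nat -> I (fun x => q x * x ^ j) = 0) -> forall x, q x = 0.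
Proof.
  revert q. induction k as [| k IH]; intros q Hq Horth; pose proof Hq as [d Hd].
  - intros x. rewrite Hd. reflexivity.
  - assert (Hdk : d k = 0).
    { assert (E : I (fun x => q x * P k x) = 0)
        by (apply (winteg_orth_poly_lt _ (S k)); [solve_poly | exact Horth | apply is_poly_lt_P]).
      rewrite (winteg_ext _ (fun x => P k x * psum d k x + d k * (P k x * x ^ k))) in E
        by (intros; rewrite Hd; simpl; ring).
      rewrite winteg_lin, winteg_P_poly_lt, winteg_P_pow_diag in E
        by first [solve_poly | exists d; reflexivity].
      pose proof (h_pos k). nra. }
    assert (Hq' : forall x, q x = psum d k x) by (intros; rewrite Hd; simpl; rewrite Hdk; ring).
    intros x. rewrite Hq'. apply IH; [exists d; reflexivity |].
    intros j Hj. rewrite <- (Horth j) by lia. apply winteg_ext. intros y. rewrite Hq'. reflexivity.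
Qed.

(* [(-1)^k P_k(-x)] is monic and, the weight being even, orthogonal to lower degrees. *)
Lemma P_comp_opp k x : P k (- x) = (-1) ^ k * P k x.
Proof.
  destruct (P_decomp k) as [r [Hr HP]].
  set (q := fun y => (-1) ^ k * P k (- y) - P k y).
  assert (Hq : is_poly_lt k q).
  { apply (is_poly_lt_ext _ (fun y => (-1) ^ k * r (- y) + -1 * r y)).
    - intros y. unfold q. rewrite !HP, opp_pow.
      transitivity ((-1) ^ k * (-1) ^ k * y ^ k + (-1) ^ k * r (- y) - (y ^ k + r y));
        [rewrite neg1_pow_mul_self |]; ring.
    - apply is_poly_lt_add; apply is_poly_lt_scal; [apply is_poly_lt_comp_opp |]; exact Hr. }
  assert (Horth : forall j, (j < k)%nat -> I (fun y => q y * y ^ j) = 0).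
  { intros j Hj. unfold q.
    rewrite (winteg_ext _ (fun y => ((-1) ^ k * (-1) ^ j) * (P k (- y) * (- y) ^ j)
                                    + -1 * (P k y * y ^ j))).
    - rewrite winteg_lin, winteg_scal, (winteg_comp_opp (fun z => P k z * z ^ j)), winteg_P_pow
        by first [solve_poly | lia].
      ring.
    - intros y. rewrite opp_pow.
      transitivity ((-1) ^ k * P k (- y) * y ^ j * ((-1) ^ j * (-1) ^ j) - P k y * y ^ j);
        [rewrite neg1_pow_mul_self |]; ring. }
  pose proof (poly_lt_orth_zero k q Hq Horth x) as Hx. unfold q in Hx.
  replace (P k x) with ((-1) ^ k * P k (- x)) by lra.
  rewrite <- Rmult_assoc, neg1_pow_mul_self. ring.
Qed.

Lemma winteg_P_pow_odd k n : Nat.Odd (k + n) -> I (fun x => P k x * x ^ n) = 0.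
Proof.
  intros [t Ht]. apply winteg_odd; [solve_poly |]. intros x.
  rewrite P_comp_opp, opp_pow.
  assert (E : (-1) ^ k * (-1) ^ n = -1).
  { rewrite <- pow_add, Ht, Nat.add_1_r. apply pow_1_odd. }
  transitivity (((-1) ^ k * (-1) ^ n) * (P k x * x ^ n)); [ring | rewrite E; ring].
Qed.

Lemma P_recurrence m x : x * P (S m) x = P (S (S m)) x + h (S m) / h m * P m x.
Proof.
  set (b := h (S m) / h m).
  set (D := fun y => y * P (S m) y - P (S (S m)) y - b * P m y).
  assert (HD : is_poly_lt (S (S m)) D).
  { destruct (P_decomp (S m)) as [r1 [Hr1 HP1]], (P_decomp (S (S m))) as [r2 [Hr2 HP2]].
    apply (is_poly_lt_ext _ (fun y => y * r1 y + -1 * r2 y + - b * P m y)).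
    - intros y. unfold D. rewrite HP1, HP2. simpl. ring.
    - apply is_poly_lt_add; [apply is_poly_lt_add |].
      + apply is_poly_lt_mulx, Hr1.
      + apply is_poly_lt_scal, Hr2.
      + apply is_poly_lt_scal, (is_poly_lt_le (S m)); [lia | apply is_poly_lt_P]. }
  assert (Horth : forall j, (j < S (S m))%nat -> I (fun y => D y * y ^ j) = 0).
  { intros j Hj. unfold D.
    rewrite (winteg_ext _ (fun y => P (S m) y * y ^ S j
                                    + -1 * (P (S (S m)) y * y ^ j + b * (P m y * y ^ j))))
      by (intros; simpl; ring).
    rewrite !winteg_lin, (winteg_P_pow (S (S m))) by first [solve_poly | lia].
    destruct (Nat.lt_trichotomy j m) as [Hlt | [-> | Hgt]].
    - rewrite !winteg_P_pow by lia. ring.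
    - rewrite !winteg_P_pow_diag. unfold b. field. apply Rgt_not_eq, h_pos.
    - replace j with (S m) by lia.
      rewrite !winteg_P_pow_odd by first [exists (S m); lia | exists m; lia]. ring. }
  pose proof (poly_lt_orth_zero _ D HD Horth x) as Hx. unfold D in Hx. lra.
Qed.

Lemma P_succ_derive m : exists g, is_poly_lt m g /\
  forall x, derivable_pt_lim (P (S m)) x (INR (S m) * x ^ m + g x).
Proof.
  destruct (P_decomp (S m)) as [r [Hr HP]]. destruct (is_poly_lt_derive _ _ Hr) as [g [Hg Dg]].
  exists g. split; [exact Hg |]. intros x.
  replace (P (S m)) with (fun y => y ^ S m + r y) by (apply functional_extensionality; auto).
  apply (derivable_pt_lim_plus (fun y => y ^ S m)); [apply derivable_pt_lim_pow | apply Dg].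
Qed.

(* Integration by parts applied to [P_{m+1} P_m]; parity turns the boundary term into
   [-2 e^{-a^2} P_{m+1}(a) P_m(a)]. *)
Lemma h_succ m : INR (S m) * h m = 2 * h (S m) - 2 * exp (- a ^ 2) * P (S m) a * P m a.
Proof.
  destruct (P_succ_derive m) as [g1 [Hg1 D1]].
  destruct (is_poly_lt_derive _ _ (is_poly_lt_P m)) as [g0 [Hg0 D0]].
  destruct (P_decomp m) as [r0 [Hr0 HP0]].
  assert (Dprod : forall x, derivable_pt_lim (fun x => P (S m) x * P m x) x
                     ((INR (S m) * x ^ m + g1 x) * P m x + P (S m) x * g0 x))
    by (intros; apply derivable_pt_lim_mult; auto).
  pose proof (winteg_ibp _ _ Dprod ltac:(solve_poly) ltac:(solve_poly)) as E.
  rewrite (winteg_ext (fun x => (INR (S m) * x ^ m + g1 x) * P m x + P (S m) x * g0 x)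
             (fun x => INR (S m) * (P m x * x ^ m) + 1 * (P m x * g1 x + 1 * (P (S m) x * g0 x))))
    in E by (intros; ring).
  rewrite (winteg_ext (fun x => x * (P (S m) x * P m x))
             (fun x => P (S m) x * (x ^ S m + x * r0 x))) in E
    by (intros x; rewrite HP0; simpl; ring).
  rewrite winteg_lin, winteg_scal, winteg_lin, winteg_P_pow_diag, !winteg_P_poly_lt,
    winteg_P_monic, !P_comp_opp in E
    by first [solve_poly | assumption | apply is_poly_lt_mulx, Hr0
             | apply (is_poly_lt_le m); [lia | assumption]].
  replace ((-1) ^ S m * P (S m) a * ((-1) ^ m * P m a)) with (- (P (S m) a * P m a)) in E.
  - lra.
  - transitivity (- ((-1) ^ m * (-1) ^ m) * (P (S m) a * P m a)); [| simpl; ring].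
    rewrite neg1_pow_mul_self. ring.
Qed.

End OrthogonalPolynomials.

Lemma Rn_identity_of_relations (N a e p0 p1 p2 h0 h1 h2 R0 R1 R2 : R) :
  0 < h0 -> 0 < h1 -> 0 < h2 ->
  N * h0 = 2 * h1 - 2 * e * p1 * p0 ->
  (N + 1) * h1 = 2 * h2 - 2 * e * p2 * p1 ->
  a * p1 = p2 + h1 / h0 * p0 ->
  R0 = 2 * e * p0 ^ 2 / h0 -> R1 = 2 * e * p1 ^ 2 / h1 -> R2 = 2 * e * p2 ^ 2 / h2 ->
  R0 * R2 * (R1 * R0 + 8 * N) * (R2 * R1 + 8 * N + 8)
  = (8 * a ^ 2 * R1 + R1 * R0 * R2 - 4 * (a * R1 + N + 1) * R2 - 4 * (a * R1 + N) * R0) ^ 2.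
Proof.
  intros Hh0 Hh1 Hh2 E1 E2 E3 -> -> ->.
  assert (EN : N = (2 * h1 - 2 * e * p1 * p0) / h0) by (field_simplify_eq; lra).
  assert (Ep2 : p2 = a * p1 - h1 / h0 * p0) by lra.
  assert (Eh2 : h2 = ((N + 1) * h1 + 2 * e * p2 * p1) / 2) by lra.
  rewrite Eh2, Ep2, EN. field. split; [lra | split; [lra |]].
  replace (2 * h1 - 2 * e * p1 * p0) with (N * h0) by lra.
  replace (a * p1 * h0 - h1 * p0) with (h0 * p2) by (rewrite Ep2; field; lra).
  replace ((N * h0 + h0) * h1 + 2 * e * (h0 * p2) * p1) with (2 * h0 * h2) by (rewrite Eh2; field).
  apply Rgt_not_eq. nra.
Qed.

Theorem mainTheorem5 (a : R) (P : nat -> R -> R) (h : nat -> R) (n : nat) :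
  0 < a -> (1 <= n)%nat -> monic_OP_family a P h ->
  let R_ := Rn a P h in
  let nn := INR n in
  R_ (n - 1)%nat * R_ (n + 1)%nat
    * (R_ n * R_ (n - 1)%nat + 8 * nn)
    * (R_ (n + 1)%nat * R_ n + 8 * nn + 8)
  = (8 * a ^ 2 * R_ n + R_ n * R_ (n - 1)%nat * R_ (n + 1)%nat
     - 4 * (a * R_ n + nn + 1) * R_ (n + 1)%nat
     - 4 * (a * R_ n + nn) * R_ (n - 1)%nat) ^ 2.
Proof.
  intros _ Hn HOP R_ nn. destruct n as [| m]; [lia |].
  replace (S m - 1)%nat with m by lia. replace (S m + 1)%nat with (S (S m)) by lia.
  apply (Rn_identity_of_relations nn a (exp (- a ^ 2)) (P m a) (P (S m) a) (P (S (S m)) a)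
           (h m) (h (S m)) (h (S (S m)))); try apply (h_pos a P h HOP);
    try reflexivity.
  - apply (h_succ a P h HOP).
  - unfold nn. rewrite <- S_INR. apply (h_succ a P h HOP).
  - rewrite (P_recurrence a P h HOP). reflexivity.
Qed.
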